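(* Let $U\subset\mathbb R$ be a closed interval, $f^l,f^r\in C(U;\mathbb R)$, and let $\mathcal G_{KRT}$ be the set of pairs $(u^l,u^r)\in U\times U$ with $f^l(u^l)=f^r(u^r)=:s$ and either $u^l=u^r$; or $u^l<u^r$ and $\max\{f^l(z),f^r(z)\}\ge s$ for all $z\in[u^l,u^r]$; or $u^l>u^r$ and $\min\{f^l(z),f^r(z)\}\le s$ for all $z\in[u^r,u^l]$. (i) There is no L1D germ strictly containing $\mathcal G_{KRT}$ (i.e. $\mathcal G_{KRT}$ admits no non-trivial L1D extension). (ii) If the crossing condition holds, namely there exists $u_\chi\in\mathbb R$ with $\operatorname{sign}(z-u_\chi)(f^r(z)-f^l(z))\ge0$ for all $z\in U$, then $\mathcal G_{KRT}$ is an L1D germ (and therefore a maximal L1D germ).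
   Context: $q^{l,r}(z,k)=\operatorname{sign}(z-k)(f^{l,r}(z)-f^{l,r}(k))$. A germ is a set $\mathcal G\subset U\times U$ of pairs with $f^l(u^l)=f^r(u^r)$; it is L1D if $q^l(u^l,\hat u^l)\ge q^r(u^r,\hat u^r)$ for all $(u^l,u^r),(\hat u^l,\hat u^r)\in\mathcal G$; an L1D germ is maximal if no strictly larger germ is L1D. *)

From Stdlib Require Import Reals Lra.
Open Scope R_scope.

Definition sign (x : R) : R :=
  match Rcase_abs x with
  | left _ => -1
  | right _ => if Req_EM_T x 0 then 0 else 1
  end.

(* U is a closed interval: nonempty, order-convex, topologically closed
   (covers [a,b], [a,+oo), (-oo,b], R). *)
Definition closed_interval (U : R -> Prop) : Prop :=
  (exists x, U x) /\
  (forall x y z, U x -> U z -> x <= y <= z -> U y) /\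
  closed_set U.

Definition continuous_on (U : R -> Prop) (f : R -> R) : Prop :=
  forall x, U x -> continue_in f U x.

Definition q (f : R -> R) (z k : R) : R := sign (z - k) * (f z - f k).

Definition germ (U : R -> Prop) (fl fr : R -> R) (G : R * R -> Prop) : Prop :=
  forall p, G p -> U (fst p) /\ U (snd p) /\ fl (fst p) = fr (snd p).

Definition L1D (fl fr : R -> R) (G : R * R -> Prop) : Prop :=
  forall p p', G p -> G p' ->
    q fl (fst p) (fst p') >= q fr (snd p) (snd p').

Definition L1D_germ U fl fr G : Prop := germ U fl fr G /\ L1D fl fr G.

Definition strictly_contains (G' G : R * R -> Prop) : Prop :=
  (forall p, G p -> G' p) /\ (exists p, G' p /\ ~ G p).

Definition maximal_L1D_germ U fl fr G : Prop :=
  L1D_germ U fl fr G /\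
  ~ (exists G', L1D_germ U fl fr G' /\ strictly_contains G' G).

Definition G_KRT (U : R -> Prop) (fl fr : R -> R) (p : R * R) : Prop :=
  let ul := fst p in let ur := snd p in
  U ul /\ U ur /\ fl ul = fr ur /\
  (ul = ur \/
   (ul < ur /\ forall z, ul <= z <= ur -> Rmax (fl z) (fr z) >= fl ul) \/
   (ul > ur /\ forall z, ur <= z <= ul -> Rmin (fl z) (fr z) <= fl ul)).

Definition crossing_condition (U : R -> Prop) (fl fr : R -> R) : Prop :=
  exists uchi : R, forall z, U z -> sign (z - uchi) * (fr z - fl z) >= 0.

From Stdlib Require Import Reals Lra Classical.
Open Scope R_scope.

(* For pairs (a,b), (c,d) at levels s = fl a = fr b and t = fl c = fr d,
   q fl a c - q fr b d = (sign (a - c) - sign (b - d)) (s - t).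
   (i) If fl a = fr b but (a,b) is not in G_KRT, say a < b, then max (fl, fr)
   drops below s on [a,b].  At a minimum point of max (fl, fr) one of fl, fr
   attains the minimal value t < s, and the intermediate value theorem gives a
   pair (c,d) of G_KRT with a < c <= d < b at level t; for it the difference
   above is -2 (s - t) < 0, so (a,b) cannot be added to G_KRT.
   (ii) For s > t the L1D inequality fails only if a < c and d < b.  Nested
   intervals of the same type are excluded by the crossing condition, which
   fixes the side of u_chi on which fl < fr; overlapping intervals of opposite
   types are excluded because fl - fr changes sign on their intersection, and
   at a zero of fl - fr the two defining conditions contradict each other. *)

Lemma sign_pos x : 0 < x -> sign x = 1.
Proof. unfold sign; intros; destruct Rcase_abs; [lra|]. destruct Req_EM_T; lra. Qed.

Lemma sign_neg x : x < 0 -> sign x = -1.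
Proof. unfold sign; intros; destruct Rcase_abs; lra. Qed.

Lemma sign_0 : sign 0 = 0.
Proof. unfold sign; destruct Rcase_abs; [lra|]. destruct Req_EM_T; lra. Qed.

Lemma sign_bounds x : -1 <= sign x <= 1.
Proof. unfold sign; destruct Rcase_abs; [lra|]. destruct Req_EM_T; lra. Qed.

Lemma sign_opp x : sign (- x) = - sign x.
Proof.
  destruct (total_order_T x 0) as [[h|h]|h].
  - rewrite (sign_neg x), (sign_pos (- x)) by lra; ring.
  - subst; rewrite Ropp_0, sign_0; ring.
  - rewrite (sign_pos x), (sign_neg (- x)) by lra; ring.
Qed.

Lemma q_sub_level_pairs fl fr a b c d :
  fl a = fr b -> fl c = fr d ->
  q fl a c - q fr b d = (sign (a - c) - sign (b - d)) * (fl a - fl c).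
Proof. unfold q; intros -> ->; ring. Qed.

Lemma continuity_pt_ext f g x :
  (forall y, f y = g y) -> continuity_pt f x -> continuity_pt g x.
Proof.
  intros efg hf e he; destruct (hf e he) as [d [hd H]].
  exists d; split; [exact hd|]; intros y hy; simpl; rewrite <- !efg; exact (H y hy).
Qed.

Lemma continuity_Rmax (F G : R -> R) :
  continuity F -> continuity G -> continuity (fun x => Rmax (F x) (G x)).
Proof.
  intros hF hG x.
  apply (continuity_pt_ext (fun y => (F y + G y + Rabs (F y - G y)) / 2)); [|reg].
  intros y; unfold Rmax, Rabs; destruct Rle_dec, Rcase_abs; lra.
Qed.

Lemma IVT_level (h : R -> R) x y v :
  continuity h -> x <= y -> (h x - v) * (h y - v) <= 0 ->
  exists z, x <= z <= y /\ h z = v.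
Proof.
  intros hh hxy hs.
  destruct (IVT_cor (fun t => h t - v) x y) as [z [hz hz0]]; [reg|exact hxy|exact hs|].
  exists z; split; [exact hz|lra].
Qed.

Definition clamp (a b x : R) : R := Rmax a (Rmin b x).

Lemma clamp_id a b x : a <= x <= b -> clamp a b x = x.
Proof. unfold clamp, Rmax, Rmin; intros; repeat destruct Rle_dec; lra. Qed.

Lemma clamp_between a b x : a <= b -> a <= clamp a b x <= b.
Proof. unfold clamp, Rmax, Rmin; intros; repeat destruct Rle_dec; lra. Qed.

Lemma clamp_dist a b x y : Rabs (clamp a b y - clamp a b x) <= Rabs (y - x).
Proof.
  unfold clamp, Rmax, Rmin; repeat destruct Rle_dec;
    unfold Rabs; repeat destruct Rcase_abs; lra.
Qed.

(* Composing with the clamp onto [a,b] turns continuity relative to U into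
   continuity on all of R. *)
Lemma continuous_on_extension U f a b :
  a <= b -> (forall y, a <= y <= b -> U y) -> continuous_on U f ->
  exists F, continuity F /\ forall y, a <= y <= b -> F y = f y.
Proof.
  intros hab hsub hf.
  exists (fun y => f (clamp a b y)); split; [|intros y hy; rewrite clamp_id; auto].
  intros x e he.
  pose proof (clamp_between a b x hab) as hx.
  destruct (hf _ (hsub _ hx) e he) as [al [hal H]].
  exists al; split; [exact hal|]; intros y [_ hy]; simpl in *; unfold Rdist in *.
  destruct (Req_dec (clamp a b y) (clamp a b x)) as [E|E].
  - rewrite E, Rminus_diag, Rabs_R0; exact he.
  - apply H; split; [split; [apply hsub, clamp_between|]; auto|].
    simpl; unfold Rdist; pose proof (clamp_dist a b x y); lra.
Qed.

Lemma exists_level_pair_below (F G : R -> R) a b :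
  continuity F -> continuity G -> a <= b -> G b = F a ->
  (exists z, a <= z <= b /\ Rmax (F z) (G z) < F a) ->
  exists c d, a < c /\ c <= d /\ d < b /\ F c = G d /\ F c < F a /\
    forall y, c <= y <= d -> F c <= Rmax (F y) (G y).
Proof.
  intros hF hG hab hGb [z [hz hzs]].
  destruct (continuity_ab_min (fun x => Rmax (F x) (G x)) a b hab) as [m [hmin hm]].
  { intros; apply continuity_Rmax; assumption. }
  cbv beta in hmin.
  assert (hm_lt : Rmax (F m) (G m) < F a) by exact (Rle_lt_trans _ _ _ (hmin z hz) hzs).
  pose proof (Rmax_l (F a) (G a)) as hFa; pose proof (Rmax_r (F b) (G b)) as hGb'.
  assert (hma : a < m) by (destruct (Req_dec a m); [subst; lra|lra]).
  assert (hmb : m < b) by (destruct (Req_dec m b); [subst; lra|lra]).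
  destruct (Rle_dec (G m) (F m)) as [hle|hlt].
  - rewrite Rmax_left in hmin, hm_lt by exact hle.
    destruct (IVT_level G m b (F m)) as [d [hd hGd]]; [exact hG|lra|nra|].
    assert (hdb : d < b) by (destruct (Req_dec d b); [subst; lra|lra]).
    exists m, d; repeat split; try lra.
    intros y hy; apply hmin; lra.
  - rewrite Rmax_right in hmin, hm_lt by lra.
    destruct (IVT_level F a m (G m)) as [c [hc hFc]]; [exact hF|lra|nra|].
    assert (hac : a < c) by (destruct (Req_dec a c); [subst; lra|lra]).
    exists c, m; repeat split; try lra.
    intros y hy; rewrite hFc; apply hmin; lra.
Qed.

(* Mirror image of the previous lemma under x |-> -x, f |-> -f (-x). *)
Lemma exists_level_pair_above (F G : R -> R) a b :
  continuity F -> continuity G -> b <= a -> G b = F a ->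
  (exists z, b <= z <= a /\ F a < Rmin (F z) (G z)) ->
  exists c d, b < d /\ d <= c /\ c < a /\ F c = G d /\ F a < F c /\
    forall y, d <= y <= c -> Rmin (F y) (G y) <= F c.
Proof.
  intros hF hG hba hGb [z [hz hzs]].
  destruct (exists_level_pair_below (fun x => - F (- x)) (fun x => - G (- x)) (- a) (- b))
    as (c & d & hac & hcd & hdb & heq & hlt & hmax);
    [reg|reg|lra|rewrite !Ropp_involutive; lra| |].
  { exists (- z); rewrite !Ropp_involutive, <- Ropp_Rmin; lra. }
  rewrite !Ropp_involutive in hlt.
  exists (- c), (- d); repeat split; try lra.
  intros y hy; generalize (hmax (- y) ltac:(lra)).
  rewrite !Ropp_involutive, <- Ropp_Rmin; lra.
Qed.

Section KRT_germ.

Variables (U : R -> Prop) (fl fr : R -> R).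
Hypothesis U_convex : forall x y z, U x -> U z -> x <= y <= z -> U y.
Hypotheses (fl_cont : continuous_on U fl) (fr_cont : continuous_on U fr).

Lemma G_KRT_of_le c d :
  U c -> U d -> c <= d -> fl c = fr d ->
  (forall y, c <= y <= d -> fl c <= Rmax (fl y) (fr y)) -> G_KRT U fl fr (c, d).
Proof.
  intros hc hd hcd heq hmax; unfold G_KRT; simpl; repeat split; auto.
  destruct (Req_dec c d) as [E|E]; [left; exact E|right; left].
  split; [lra|]; intros y hy; apply Rle_ge, hmax, hy.
Qed.

Lemma G_KRT_of_ge c d :
  U c -> U d -> d <= c -> fl c = fr d ->
  (forall y, d <= y <= c -> Rmin (fl y) (fr y) <= fl c) -> G_KRT U fl fr (c, d).
Proof.
  intros hc hd hdc heq hmin; unfold G_KRT; simpl; repeat split; auto.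
  destruct (Req_dec c d) as [E|E]; [left; exact E|right; right].
  split; [lra|exact hmin].
Qed.

Lemma G_KRT_pair_below a b :
  a <= b -> U a -> U b -> fl a = fr b ->
  (exists z, a <= z <= b /\ Rmax (fl z) (fr z) < fl a) ->
  exists c d, G_KRT U fl fr (c, d) /\ a < c /\ d < b /\ fl c < fl a.
Proof.
  intros hab ha hb hs [z [hz hzs]].
  assert (hsub : forall y, a <= y <= b -> U y) by (intros y; apply U_convex; assumption).
  destruct (continuous_on_extension U fl a b hab hsub fl_cont) as [F [hF eF]].
  destruct (continuous_on_extension U fr a b hab hsub fr_cont) as [G [hG eG]].
  destruct (exists_level_pair_below F G a b hF hG hab)
    as (c & d & hac & hcd & hdb & heq & hlt & hmax).
  - rewrite eF, eG by lra; lra.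
  - exists z; rewrite eF, eG, eF by lra; auto.
  - rewrite !eF, eG in * by lra.
    exists c, d; split; [|lra].
    apply G_KRT_of_le; auto; try (apply hsub; lra); try lra.
    intros y hy; rewrite <- (eF y), <- (eG y) by lra; apply hmax, hy.
Qed.

Lemma G_KRT_pair_above a b :
  b <= a -> U a -> U b -> fl a = fr b ->
  (exists z, b <= z <= a /\ fl a < Rmin (fl z) (fr z)) ->
  exists c d, G_KRT U fl fr (c, d) /\ c < a /\ b < d /\ fl a < fl c.
Proof.
  intros hba ha hb hs [z [hz hzs]].
  assert (hsub : forall y, b <= y <= a -> U y) by (intros y; apply U_convex; assumption).
  destruct (continuous_on_extension U fl b a hba hsub fl_cont) as [F [hF eF]].
  destruct (continuous_on_extension U fr b a hba hsub fr_cont) as [G [hG eG]].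
  destruct (exists_level_pair_above F G a b hF hG hba)
    as (c & d & hbd & hdc & hca & heq & hlt & hmin).
  - rewrite eF, eG by lra; lra.
  - exists z; rewrite eF, eG, eF by lra; auto.
  - rewrite !eF, eG in * by lra.
    exists c, d; split; [|lra].
    apply G_KRT_of_ge; auto; try (apply hsub; lra); try lra.
    intros y hy; rewrite <- (eF y), <- (eG y) by lra; apply hmin, hy.
Qed.

Lemma not_G_KRT_violates_L1D a b :
  U a -> U b -> fl a = fr b -> ~ G_KRT U fl fr (a, b) ->
  exists c d, G_KRT U fl fr (c, d) /\ q fl a c < q fr b d.
Proof.
  intros ha hb hs hn.
  destruct (Rle_or_lt a b) as [hab|hba].
  - destruct (classic (exists z, a <= z <= b /\ Rmax (fl z) (fr z) < fl a)) as [hz|hz].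
    2: { exfalso; apply hn, G_KRT_of_le; auto.
         intros y hy; apply Rnot_lt_le; intro hy'; apply hz; exists y; auto. }
    destruct (G_KRT_pair_below a b hab ha hb hs hz) as (c & d & hcd & hac & hdb & hlt).
    exists c, d; split; [exact hcd|].
    assert (hcd' : fl c = fr d) by apply hcd.
    pose proof (q_sub_level_pairs fl fr a b c d hs hcd') as hq.
    rewrite (sign_neg (a - c)), (sign_pos (b - d)) in hq by lra; nra.
  - destruct (classic (exists z, b <= z <= a /\ fl a < Rmin (fl z) (fr z))) as [hz|hz].
    2: { exfalso; apply hn, G_KRT_of_ge; auto; [lra|].
         intros y hy; apply Rnot_lt_le; intro hy'; apply hz; exists y; auto. }
    destruct (G_KRT_pair_above a b ltac:(lra) ha hb hs hz) as (c & d & hcd & hca & hbd & hlt).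
    exists c, d; split; [exact hcd|].
    assert (hcd' : fl c = fr d) by apply hcd.
    pose proof (q_sub_level_pairs fl fr a b c d hs hcd') as hq.
    rewrite (sign_pos (a - c)), (sign_neg (b - d)) in hq by lra; nra.
Qed.

Lemma G_KRT_no_L1D_extension :
  ~ exists G', L1D_germ U fl fr G' /\ strictly_contains G' (G_KRT U fl fr).
Proof.
  intros [G' [[hgerm hL1D] [hsub [[a b] [hG' hnot]]]]].
  destruct (hgerm _ hG') as (ha & hb & hs); simpl in *.
  destruct (not_G_KRT_violates_L1D a b ha hb hs hnot) as (c & d & hcd & hq).
  pose proof (hL1D _ _ hG' (hsub _ hcd)) as hge; simpl in hge; lra.
Qed.

Lemma exists_coincidence e1 e2 :
  e1 <= e2 -> U e1 -> U e2 -> fr e1 < fl e1 -> fl e2 < fr e2 ->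
  exists z, e1 <= z <= e2 /\ fl z = fr z.
Proof.
  intros h12 h1 h2 hgt hlt.
  assert (hsub : forall y, e1 <= y <= e2 -> U y) by (intros y; apply U_convex; assumption).
  destruct (continuous_on_extension U fl e1 e2 h12 hsub fl_cont) as [F [hF eF]].
  destruct (continuous_on_extension U fr e1 e2 h12 hsub fr_cont) as [G [hG eG]].
  destruct (IVT_level (fun x => F x - G x) e1 e2 0) as [z [hz hz0]]; [reg|exact h12| |].
  - rewrite !eF, !eG by lra; nra.
  - exists z; split; [exact hz|]; rewrite <- eF, <- eG by exact hz; lra.
Qed.

Lemma G_KRT_no_straddle a b c d :
  U a -> U b -> U c -> U d -> a < b -> d < c -> a < c -> d < b ->
  fl a = fr b -> fl c = fr d -> fl c < fl a ->
  (forall y, a <= y <= b -> Rmax (fl y) (fr y) >= fl a) ->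
  (forall y, d <= y <= c -> Rmin (fl y) (fr y) <= fl c) -> False.
Proof.
  intros ha hb hc hd hab hdc hac hdb hs ht hts hmax hmin.
  assert (hleft : fr (Rmax a d) < fl (Rmax a d)).
  { apply Rmax_case_strong; intros h.
    - generalize (hmin a ltac:(lra)); unfold Rmin; destruct Rle_dec; lra.
    - generalize (hmax d ltac:(lra)); unfold Rmax; destruct Rle_dec; lra. }
  assert (hright : fl (Rmin b c) < fr (Rmin b c)).
  { apply Rmin_case_strong; intros h.
    - generalize (hmin b ltac:(lra)); unfold Rmin; destruct Rle_dec; lra.
    - generalize (hmax c ltac:(lra)); unfold Rmax; destruct Rle_dec; lra. }
  pose proof (Rmax_lub a d _ (Rmin_glb b c a ltac:(lra) ltac:(lra))
                             (Rmin_glb b c d ltac:(lra) ltac:(lra))) as hlow.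
  destruct (exists_coincidence (Rmax a d) (Rmin b c)) as [z [hz hfz]]; auto;
    [apply Rmax_case; auto|apply Rmin_case; auto|].
  pose proof (Rmax_l a d); pose proof (Rmax_r a d).
  pose proof (Rmin_l b c); pose proof (Rmin_r b c).
  generalize (hmax z ltac:(lra)); generalize (hmin z ltac:(lra)).
  rewrite hfz, Rmin_left, Rmax_left by lra; lra.
Qed.

Section Crossing.

Variable uchi : R.
Hypothesis crossing : forall z, U z -> sign (z - uchi) * (fr z - fl z) >= 0.

Lemma fl_lt_fr_right z : U z -> fl z < fr z -> uchi <= z.
Proof.
  intros hz h; apply Rnot_lt_le; intro hl.
  generalize (crossing z hz); rewrite sign_neg by lra; lra.
Qed.

Lemma fr_lt_fl_left z : U z -> fr z < fl z -> z <= uchi.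
Proof.
  intros hz h; apply Rnot_lt_le; intro hl.
  generalize (crossing z hz); rewrite sign_pos by lra; lra.
Qed.

Lemma G_KRT_no_inversion a b c d :
  G_KRT U fl fr (a, b) -> G_KRT U fl fr (c, d) -> fl c < fl a -> a < c -> d < b -> False.
Proof.
  unfold G_KRT; simpl.
  intros (ha & hb & hs & Tab) (hc & hd & ht & Tcd) hts hac hdb.
  destruct Tab as [-> | [[hab hmax] | [hba hmin]]];
    destruct Tcd as [<- | [[hcd hmax'] | [hdc hmin']]]; try lra.
  - generalize (hmin' b ltac:(lra)); unfold Rmin; destruct Rle_dec; lra.
  - generalize (hmax c ltac:(lra)); unfold Rmax; destruct Rle_dec; lra.
  - generalize (hmax c ltac:(lra)); generalize (hmax d ltac:(lra)).
    unfold Rmax; destruct Rle_dec, Rle_dec; try lra; intros.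
    pose proof (fl_lt_fr_right c hc ltac:(lra)); pose proof (fr_lt_fl_left d hd ltac:(lra)).
    lra.
  - exact (G_KRT_no_straddle a b c d ha hb hc hd hab hdc hac hdb hs ht hts hmax hmin').
  - generalize (hmin' b ltac:(lra)); generalize (hmin' a ltac:(lra)).
    unfold Rmin; destruct Rle_dec, Rle_dec; try lra; intros.
    pose proof (fl_lt_fr_right b hb ltac:(lra)); pose proof (fr_lt_fl_left a ha ltac:(lra)).
    lra.
Qed.

Lemma G_KRT_sign_le a b c d :
  G_KRT U fl fr (a, b) -> G_KRT U fl fr (c, d) -> fl c < fl a -> sign (b - d) <= sign (a - c).
Proof.
  intros hab hcd hts.
  assert (hs : fl a = fr b) by apply hab.
  assert (ht : fl c = fr d) by apply hcd.
  pose proof (sign_bounds (b - d)).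
  destruct (total_order_T a c) as [[hac|hac]|hac];
    [|subst; lra|rewrite (sign_pos (a - c)) by lra; lra].
  destruct (total_order_T b d) as [[hbd|hbd]|hbd]; [|subst; lra|].
  - rewrite (sign_neg (a - c)), (sign_neg (b - d)) by lra; lra.
  - exfalso; exact (G_KRT_no_inversion a b c d hab hcd hts hac hbd).
Qed.

Lemma G_KRT_L1D : L1D fl fr (G_KRT U fl fr).
Proof.
  intros [a b] [c d] hab hcd; simpl.
  assert (hs : fl a = fr b) by apply hab.
  assert (ht : fl c = fr d) by apply hcd.
  apply Rminus_ge; rewrite q_sub_level_pairs by assumption.
  destruct (total_order_T (fl a) (fl c)) as [[hlt|heq]|hgt].
  - generalize (G_KRT_sign_le c d a b hcd hab hlt).
    replace (d - b) with (- (b - d)) by ring; replace (c - a) with (- (a - c)) by ring.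
    rewrite !sign_opp; intros; nra.
  - rewrite heq; lra.
  - pose proof (G_KRT_sign_le a b c d hab hcd hgt); nra.
Qed.

End Crossing.

End KRT_germ.

Theorem proposition4p11 (U : R -> Prop) (fl fr : R -> R)
  (hU : closed_interval U) (hfl : continuous_on U fl) (hfr : continuous_on U fr) :
  (~ exists G', L1D_germ U fl fr G' /\ strictly_contains G' (G_KRT U fl fr)) /\
  (crossing_condition U fl fr ->
     L1D_germ U fl fr (G_KRT U fl fr) /\ maximal_L1D_germ U fl fr (G_KRT U fl fr)).
Proof.
  destruct hU as [_ [hconv _]].
  pose proof (G_KRT_no_L1D_extension U fl fr hconv hfl hfr) as no_extension.
  split; [exact no_extension|].
  intros [uchi hcross].
  assert (hgerm : L1D_germ U fl fr (G_KRT U fl fr)).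
  { split; [intros [a b] (ha & hb & hs & _); auto|].
    exact (G_KRT_L1D U fl fr hconv hfl hfr uchi hcross). }
  exact (conj hgerm (conj hgerm no_extension)).
Qed.
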